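(* Let $S=\{(x_i,y_i)\}_{i=1}^n$ be a training set, $\{f_\theta\}$ a parameterized family of classifiers, $1\le k\le n$, and let $\hat\theta\in\arg\min_\theta L_{\textrm{close-}k}(\{\ell(y_i,f_\theta(x_i))\}_{i=1}^n)$. Then $$L_{0-1}(\hat\theta)\le \min_\theta L_{0-1}(\{(y_i,f_\theta(x_i))\}_{i=1}^n) + k - 1,$$ where $L_{0-1}(\theta)$ denotes the number of training examples misclassified by $f_\theta$.
   Context: Binary classification with labels $y\in\{-1,+1\}$ and real-valued predictions. An individual loss $\ell(y,f(x))\ge 0$ comes with a threshold $T$ such that an example is correctly classified iff its individual loss is below $T$ (e.g. logistic loss with $T=\log 2$, hinge loss with $T=1$). Given individual losses $\ell_1,\dots,\ell_n$, let $\ell_{[i]}$ be the individual loss with the $i$-th smallest value of $|\ell_j-T|$. For a constant $M$ at least as large as every individual loss that occurs, the close-$k$ aggregate loss is $L_{\textrm{close-}k}(\{\ell_i\})=\sum_{i=1}^n c_i$ with $c_i=\ell_{[i]}$ if $i\le k$, $c_i=0$ if $i>k$ and $\ell_{[i]}$ is correctly classified, and $c_i=M$ if $i>k$ and $\ell_{[i]}$ is incorrectly classified. $L_{0-1}(\{(y_i,f_\theta(x_i))\})$ is the number of $i$ with $y_i\ne\mathrm{sgn} f_\theta(x_i)$. *)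

From mathcomp Require Import all_boot all_order all_algebra.
Set Implicit Arguments. Unset Strict Implicit. Unset Printing Implicit Defensive.
Import Order.TTheory GRing.Theory Num.Theory.
Local Open Scope ring_scope.

(* The losses are sorted (stably) by
   increasing |l - T|; the i-th one (0-based, i.e. position i+1) contributes
   itself if i < k, 0 if it is correctly classified (l < T), and M otherwise. *)
Definition close_k {R : realDomainType} (T M : R) (k : nat) (ls : seq R) : R :=
  let s := sort (fun a b : R => `|a - T| <= `|b - T|) ls in
  \sum_(i < size s) (if (i < k)%N then s`_i else if s`_i < T then 0 else M).

Definition losses {R : realDomainType} (ell : R -> R -> R) (n : nat)
  (y : 'I_n -> R) (p : 'I_n -> R) : seq R :=
  [seq ell (y i) (p i) | i <- enum 'I_n].

Definition L01 {R : realDomainType} (n : nat) (y : 'I_n -> R) (p : 'I_n -> R) : nat :=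
  #|[set i : 'I_n | y i != Num.sg (p i)]|.

(** Past the first k positions the
    close-k loss charges exactly M per misclassified example, while each of
    the first k contributes its own loss, which lies in [0, T) if the example
    is correct and in [T, M] otherwise.  Hence, with c misclassified examples,
    k T + c M <= L_close-k + k M, and L_close-k < k T + c M when T > 0.  If a
    minimiser made k more mistakes than some other parameter, these two bounds
    would make its close-k loss strictly larger.  When T <= 0 every example
    counts as misclassified and the claim is trivial. *)

From mathcomp Require Import all_boot all_order all_algebra.
From mathcomp Require Import zify lra.
Set Implicit Arguments. Unset Strict Implicit. Unset Printing Implicit Defensive.
Import Order.TTheory GRing.Theory Num.Theory.
Local Open Scope ring_scope.

Lemma sum_nth_take_drop (A : Type) (V : nmodType) (x0 : A) (F G : A -> V)
    (k : nat) (s : seq A) :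
  \sum_(i < size s) (if (i < k)%N then F (nth x0 s i) else G (nth x0 s i))
  = \sum_(a <- take k s) F a + \sum_(a <- drop k s) G a.
Proof.
have split0 (r : seq A) :
    \sum_(i < size r) (if (i < 0)%N then F (nth x0 r i) else G (nth x0 r i))
    = \sum_(a <- take 0 r) F a + \sum_(a <- drop 0 r) G a.
  by rewrite take0 drop0 big_nil add0r (big_nth x0) big_mkord.
elim: s k => [|a s IH] [|k]; [exact: split0 | | exact: split0 |].
  by rewrite big_ord0 !big_nil addr0.
by rewrite big_ord_recl big_cons -addrA -IH.
Qed.

Lemma sumr_if_count (A : Type) (V : nmodType) (P : pred A) (c : V) (s : seq A) :
  \sum_(a <- s) (if P a then c else 0) = c *+ count P s.
Proof. by rewrite -big_mkcond big_const_seq iter_addr_0. Qed.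

Section CloseK.
Variables (R : realDomainType) (T M : R).

Definition close_k_sorted (k : nat) (s : seq R) : R :=
  \sum_(l <- take k s) l + (count (>= T) (drop k s))%:R * M.

Lemma close_kE (k : nat) (ls : seq R) :
  close_k T M k ls
  = close_k_sorted k (sort (fun a b : R => `|a - T| <= `|b - T|) ls).
Proof.
rewrite /close_k /close_k_sorted.
rewrite (sum_nth_take_drop 0 id (fun l => if l < T then 0 else M)) mulr_natl -sumr_if_count.
by congr (_ + _); apply: eq_bigr => l _; rewrite ltNge; case: (T <= l).
Qed.

Lemma close_k_sorted_lbound (k : nat) (s : seq R) :
  {in s, forall l, 0 <= l} -> T <= M ->
  k%:R * T + (count (>= T) s)%:R * M <= close_k_sorted k s + k%:R * M.
Proof.
move=> s_ge0 TM.
rewrite -{1}(cat_take_drop k s) count_cat natrD /close_k_sorted.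
set a := count _ (take k s).
have head_ge : T *+ a <= \sum_(l <- take k s) l.
  rewrite -sumr_if_count !big_seq; apply: ler_sum => l l_take.
  have l_ge0 : 0 <= l := s_ge0 l (mem_take l_take).
  by case: ifP.
have a_le_k : (a <= k)%N.
  by rewrite (leq_trans (count_size _ _)) // size_take_min geq_minl.
have : 0 <= (k%:R - a%:R) * (M - T).
  by apply: mulr_ge0; rewrite subr_ge0 // ler_nat.
move: head_ge; rewrite -mulr_natl; lra.
Qed.

Lemma close_k_sorted_ubound (k : nat) (s : seq R) :
  {in s, forall l, l <= M} -> 0 < T -> (0 < k)%N -> (0 < size s)%N ->
  close_k_sorted k s < k%:R * T + (count (>= T) s)%:R * M.
Proof.
move=> s_leM T_gt0 k_gt0 s_gt0.
rewrite -{2}(cat_take_drop k s) count_cat natrD /close_k_sorted.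
(* termwise strict: a misclassified loss is <= M < T + M, a correct one < T *)
have head_lt : \sum_(l <- take k s) l
               < \sum_(l <- take k s) (T + (if T <= l then M else 0)).
  have take_gt0 : (0 < size (take k s))%N by rewrite size_take_min leq_min k_gt0.
  rewrite !big_seq; apply: ltr_sum => [|l l_take].
    apply/hasP; exists (nth 0 (take k s) 0) => //; exact: mem_nth.
  have := s_leM l (mem_take l_take).
  by case: ifP => [_|/negbT]; rewrite -?ltNge; lra.
rewrite big_split /= big_const_seq iter_addr_0 sumr_if_count count_predT in head_lt.
have size_le_k : (size (take k s))%:R * T <= k%:R * T.
  by apply: ler_wpM2r; [exact: ltW | rewrite ler_nat size_take_min geq_minl].
move: head_lt; rewrite -[T *+ _]mulr_natl -[M *+ _]mulr_natl; lra.
Qed.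

Lemma close_k_sorted_count_lt (k : nat) (s t : seq R) :
  (0 < k)%N -> size s = size t ->
  {in s, forall l, 0 <= l <= M} -> {in t, forall l, 0 <= l <= M} ->
  close_k_sorted k s <= close_k_sorted k t ->
  (count (>= T) s < count (>= T) t + k)%N.
Proof.
move=> k_gt0 size_st s_bnd t_bnd le_st.
have [T_le0|T_gt0] := leP T 0.
  have -> : count (>= T) t = size t.
    rewrite -[RHS]count_predT; apply: eq_in_count => l /t_bnd /andP[l_ge0 _].
    exact: le_trans T_le0 l_ge0.
  by rewrite -size_st (leq_ltn_trans (count_size _ s)) // -{1}[size s]addn0 ltn_add2l.
rewrite ltnNge; apply/negP => many_errors.
have /hasP[l0 l0_s T_le_l0] : has (>= T) s.
  by rewrite has_count (leq_trans _ many_errors) // addn_gt0 k_gt0 orbT.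
have T_le_M : T <= M by have /andP[_ /(le_trans T_le_l0)] := s_bnd l0 l0_s.
have t_gt0 : (0 < size t)%N by rewrite -size_st; case: (s) l0_s.
have s_ge0 : {in s, forall l, 0 <= l} by move=> l /s_bnd /andP[].
have t_leM : {in t, forall l, l <= M} by move=> l /t_bnd /andP[].
have lower := close_k_sorted_lbound k s_ge0 T_le_M.
have upper := close_k_sorted_ubound t_leM T_gt0 k_gt0 t_gt0.
have : (count (>= T) t + k)%:R * M <= (count (>= T) s)%:R * M.
  by rewrite ler_wpM2r ?ler_nat // (le_trans (ltW T_gt0)).
rewrite natrD mulrDl; lra.
Qed.

Lemma close_k_count_lt (k : nat) (ls ls' : seq R) :
  (0 < k)%N -> size ls = size ls' ->
  {in ls, forall l, 0 <= l <= M} -> {in ls', forall l, 0 <= l <= M} ->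
  close_k T M k ls <= close_k T M k ls' ->
  (count (>= T) ls < count (>= T) ls' + k)%N.
Proof.
move=> k_gt0 size_eq ls_bnd ls'_bnd; rewrite !close_kE.
move/(close_k_sorted_count_lt k_gt0); rewrite !count_sort !size_sort; apply=> // l.
  by rewrite mem_sort; apply: ls_bnd.
by rewrite mem_sort; apply: ls'_bnd.
Qed.

End CloseK.

Lemma L01_count_losses (R : realDomainType) (ell : R -> R -> R) (T : R) (n : nat)
    (y p : 'I_n -> R) :
  (forall i, y i = 1 \/ y i = -1) ->
  (forall yy t : R, (yy = 1 \/ yy = -1) -> (ell yy t < T <-> yy = Num.sg t)) ->
  L01 y p = count (>= T) (losses ell y p).
Proof.
move=> y_pm1 ell_correct.
rewrite /L01 /losses count_map cardsE -sum1_card -sum1_count big_enum_cond.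
apply: eq_bigl => i; rewrite !inE /= leNgt; congr (~~ _).
by apply/eqP/idP => /(ell_correct _ _ (y_pm1 i)).
Qed.

Theorem lemma2 (R : realFieldType) (X Theta : Type) (n : nat)
  (x : 'I_n -> X) (y : 'I_n -> R) (f : Theta -> X -> R)
  (ell : R -> R -> R) (T M : R) (k : nat) (thetahat : Theta) :
  (forall i, y i = 1 \/ y i = -1) ->
  (forall yy t : R, (yy = 1 \/ yy = -1) -> 0 <= ell yy t) ->
  (forall yy t : R, (yy = 1 \/ yy = -1) -> (ell yy t < T <-> yy = Num.sg t)) ->
  (forall (th : Theta) (i : 'I_n), ell (y i) (f th (x i)) <= M) ->
  (1 <= k <= n)%N ->
  (forall th : Theta,
      close_k T M k (losses ell y (fun i => f thetahat (x i)))
      <= close_k T M k (losses ell y (fun i => f th (x i)))) ->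
  forall th : Theta,
    (L01 y (fun i => f thetahat (x i)) <= L01 y (fun i => f th (x i)) + k - 1)%N.
Proof.
move=> y_pm1 ell_ge0 ell_correct ell_leM /andP[k_gt0 _] opt th.
have bounds h : {in losses ell y (fun i => f h (x i)), forall l, 0 <= l <= M}.
  by move=> l /mapP[i _ ->]; rewrite ell_ge0 ?ell_leM.
have size_eq : size (losses ell y (fun i => f thetahat (x i)))
               = size (losses ell y (fun i => f th (x i))) by rewrite !size_map.
have := close_k_count_lt k_gt0 size_eq (bounds thetahat) (bounds th) (opt th).
rewrite -!(L01_count_losses _ y_pm1 ell_correct); lia.
Qed.
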